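(* Fix an integer $k\ge1$ and $p\in(0,1)$. For an integer $K=K(n)\le n-k$ define \[ T^K_{k+1}=\sum_{s\in C_{k+1},\ \min(s)\le K}\prod_{i\ne j\in s}Y_{i,j}\Bigl[\prod_{i=1}^{\min(s)-1}\Bigl(1-\prod_{j\in s}Y_{i,j}\Bigr)-\prod_{i=1}^{\min(s)-1}\Bigl(1-\prod_{j\in s_-}Y_{i,j}\Bigr)\Bigr]. \] If there is $\epsilon>0$ with $K(n)/\ln^{1+\epsilon}(n)\to\infty$ as $n\to\infty$, then $\mathbb{P}(T_{k+1}-T^K_{k+1}\ne0)\to0$ as $n\to\infty$.
   Context: $G(n,p)$ is the random graph on $[n]$ where each of the $\binom n2$ edges is present independently with probability $p$; $Y_{i,j}=Y_{j,i}$ is the indicator of edge $\{i,j\}$. $C_{k+1}$ is the set of $(k+1)$-element subsets of $[n]$, $s_-=s\setminus\{\min s\}$, and \[ T_{k+1}=\sum_{s\in C_{k+1}}\prod_{i\ne j\in s}Y_{i,j}\Bigl[\prod_{i=1}^{\min(s)-1}\Bigl(1-\prod_{j\in s}Y_{i,j}\Bigr)-\prod_{i=1}^{\min(s)-1}\Bigl(1-\prod_{j\in s_-}Y_{i,j}\Bigr)\Bigr], \] which is the number of $k$-simplices of the clique complex $X(n,p)$ of $G$ that are critical for the lexicographical matching (pairing each simplex $s$ having some $j<\min s$ with $s\cup\{j\}$ a simplex to $s\cup\{j_0\}$, $j_0$ the least such $j$). *)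

From HB Require Import structures.
From mathcomp Require Import all_boot all_order all_algebra.
From mathcomp Require Import all_classical all_reals all_analysis.
Unset Printing Implicit Defensive.
Import Order.TTheory GRing.Theory Num.Theory.
Local Open Scope ring_scope.

(* Vertices of G(n,p) are 'I_n; the ordinal i stands for the vertex i+1 of [n]. *)

Definition edges (n : nat) : {set {set 'I_n}} := [set e : {set 'I_n} | #|e| == 2%N].

Definition Y (R : realType) {n : nat} (E : {set {set 'I_n}}) (i j : 'I_n) : R :=
  ([set i; j] \in E)%:R.

Definition gnp_prob (R : realType) (n : nat) (p : R)
    (A : {set {set 'I_n}} -> bool) : R :=
  \sum_(E : {set {set 'I_n}} | (E \subset edges n) && A E)
     p ^+ #|E| * (1 - p) ^+ (#|edges n| - #|E|).

(* 0-based minimum of a (nonempty) vertex set; min(s) (1-based) = minv s + 1. *)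
Definition minv {n : nat} (s : {set 'I_n}) : nat := \big[minn/n]_(i in s) val i.

Definition crit_term (R : realType) {n : nat} (E : {set {set 'I_n}})
    (s : {set 'I_n}) : R :=
  (\prod_(i in s) \prod_(j in s | i != j) Y R E i j) *
  ((\prod_(i : 'I_n | (val i < minv s)%N) (1 - \prod_(j in s) Y R E i j)) -
   (\prod_(i : 'I_n | (val i < minv s)%N)
       (1 - \prod_(j in s | val j != minv s) Y R E i j))).

Definition Tcrit (R : realType) (n k : nat) (E : {set {set 'I_n}}) : R :=
  \sum_(s : {set 'I_n} | #|s| == k.+1) crit_term R E s.

Definition TcritK (R : realType) (n k : nat) (K : int) (E : {set {set 'I_n}}) : R :=
  \sum_(s : {set 'I_n} | (#|s| == k.+1) && ((minv s).+1%:Z <= K)%R) crit_term R E s.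

From HB Require Import structures.
From mathcomp Require Import all_boot all_order all_algebra zify.
From mathcomp Require Import all_classical all_reals all_analysis.
Import Order.TTheory GRing.Theory Num.Theory.
Import numFieldNormedType.Exports.
Local Open Scope ring_scope.

(* A (k+1)-set s contributes to T_{k+1} only if no vertex below min(s) is
   adjacent to every vertex of s.  Each of the min(s) - 1 vertices below min(s)
   is adjacent to all of s independently with probability p^(k+1), so this
   happens with probability (1 - p^(k+1))^(min(s) - 1).  By the union bound
   over the (k+1)-sets with min(s) > K, the probability that T_{k+1} differs
   from T^K_{k+1} is at most n^(k+1) (1 - p^(k+1))^K, which is at most 1/n once
   K >= (k+2) ln n / (- ln (1 - p^(k+1))); the growth of K ensures this for
   large n. *)

Section ProductBernoulli.
Variables (R : numDomainType) (T : finType) (q : T -> R).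

Definition bern_weight (E : {set T}) : R :=
  \prod_x (if x \in E then q x else 1 - q x).

Definition bern_mean (f : {set T} -> R) : R := \sum_E bern_weight E * f E.

Lemma bern_mean_sum (I : finType) (P : pred I) (f : I -> {set T} -> R) :
  bern_mean (fun E => \sum_(i | P i) f i E) = \sum_(i | P i) bern_mean (f i).
Proof. by rewrite /bern_mean; under eq_bigr do rewrite mulr_sumr; exact: exchange_big. Qed.

Lemma bern_meanZ (c : R) (f : {set T} -> R) :
  bern_mean (fun E => c * f E) = c * bern_mean f.
Proof. by rewrite /bern_mean mulr_sumr; apply: eq_bigr => E _; rewrite mulrCA. Qed.

Lemma bern_mean_prod_mem (F : {set T}) :
  bern_mean (fun E => \prod_(x in F) (x \in E)%:R) = \prod_(x in F) q x.
Proof.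
have -> : \prod_(x in F) q x = \prod_x (q x + (1 - q x) * (x \notin F)%:R).
  rewrite [RHS](bigID (mem F)) /= [X in _ * X]big1 ?mulr1 => [|x /negbTE->]; last first.
    by rewrite mulr1 addrC subrK.
  by apply: eq_bigr => x ->; rewrite mulr0 addr0.
rewrite bigA_distr /bern_mean; apply: eq_bigr => E _.
rewrite [X in _ * X]big_mkcond -big_split /=; apply: eq_bigr => x _.
by case: (x \in E); case: (x \in F); rewrite ?mulr1 ?mulr0.
Qed.

Hypothesis q01 : forall x, 0 <= q x <= 1.

Lemma bern_weight_ge0 (E : {set T}) : 0 <= bern_weight E.
Proof.
apply: prodr_ge0 => x _; have /andP[q0 q1] := q01 x.
by case: ifP; rewrite ?subr_ge0.
Qed.

Lemma bern_mean_le (f g : {set T} -> R) :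
  (forall E, f E <= g E) -> bern_mean f <= bern_mean g.
Proof. by move=> fg; apply: ler_sum => E _; rewrite ler_wpM2l ?bern_weight_ge0. Qed.

Lemma bern_mean_union_le (I : finType) (P : pred I) (A : I -> {set T} -> bool)
    (B : {set T} -> bool) :
  (forall E, B E -> exists2 i, P i & A i E) ->
  bern_mean (fun E => (B E)%:R) <= \sum_(i | P i) bern_mean (fun E => (A i E)%:R).
Proof.
move=> BA; rewrite -bern_mean_sum; apply: bern_mean_le => E.
have sum_ge0 (Q : pred I) : 0 <= \sum_(i | Q i) (A i E)%:R :> R by exact: sumr_ge0.
have [/BA[i Pi AiE]|_] := boolP (B E); last exact: sum_ge0.
by rewrite (bigD1 i) //= AiE lerDl.
Qed.

End ProductBernoulli.

Arguments bern_mean {R T} q f.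

Lemma prodr1B_powerset (R : comNzRingType) (I : finType) (B : {set I}) (f : I -> R) :
  \prod_(i in B) (1 - f i) = \sum_(J in powerset B) (-1) ^+ #|J| * \prod_(i in J) f i.
Proof.
rewrite big_mkcond /=.
have -> : \prod_i (if i \in B then 1 - f i else 1) = \prod_i ((if i \in B then - f i else 0) + 1).
  by apply: eq_bigr => i _; case: (i \in B); rewrite ?add0r // addrC.
rewrite bigA_distr [RHS]big_mkcond /=; apply: eq_bigr => J _.
rewrite powersetE; case: ifP => [JB|/negbT/fintype.subsetPn[i iJ iB]]; last first.
  by rewrite (bigD1 i) //= iJ (negbTE iB) mul0r.
rewrite -prodrN [RHS]big_mkcond /=; apply: eq_bigr => i _.
by case: ifP => // /(fintype.subsetP JB) ->.
Qed.

Lemma bin_leq_exp (n m : nat) : ('C(n, m) <= n ^ m)%N.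
Proof.
apply: (@leq_trans ('C(n, m) * m`!)); first by rewrite leq_pmulr // fact_gt0.
rewrite bin_ffact ffact_prod (_ : n ^ m = \prod_(i < m) n)%N; last first.
  by rewrite prod_nat_const card_ord.
by apply: leq_prod => i _; rewrite leq_subr.
Qed.

(* G(n,p) is the product Bernoulli measure on sets of pairs in which the
   subsets of 'I_n that are not pairs have probability 0 (gnp_prob_mean). *)
Definition gnp_edge_prob {R : numDomainType} {n : nat} (p : R) (x : {set 'I_n}) : R :=
  (x \in edges n)%:R * p.

Section GnpMean.
Variables (R : realType) (n : nat) (p : R).

Lemma gnp_prob_ge0 (A : {set {set 'I_n}} -> bool) : 0 <= p <= 1 -> 0 <= gnp_prob R n p A.
Proof. by case/andP=> p0 p1; apply: sumr_ge0 => E _; rewrite mulr_ge0 ?exprn_ge0 ?subr_ge0. Qed.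

Lemma gnp_prob_mean (A : {set {set 'I_n}} -> bool) :
  gnp_prob R n p A = bern_mean (gnp_edge_prob p) (fun E => (A E)%:R).
Proof.
rewrite /gnp_prob /bern_mean big_mkcond /=; apply: eq_bigr => E _.
have [EU|/fintype.subsetPn[x xE xU]] := boolP (E \subset edges n); last first.
  by rewrite /bern_weight (bigD1 x) //= xE /gnp_edge_prob (negbTE xU) !mul0r.
case: (A E); rewrite /= ?mulr0 // mulr1 /bern_weight; symmetry.
rewrite (bigID (mem (edges n))) /= [X in _ * X]big1 ?mulr1 => [|x /negbTE xU]; last first.
  by rewrite /gnp_edge_prob xU mul0r subr0 (negbTE (contra (fintype.subsetP EU x) _)) ?xU.
rewrite (bigID (mem E)) /= /gnp_edge_prob.
rewrite (eq_bigr (fun=> p)) => [|x /andP[-> ->]]; last by rewrite mul1r.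
rewrite [X in _ * X](eq_bigr (fun=> 1 - p)) => [|x /andP[-> /negbTE->]]; last by rewrite mul1r.
rewrite !prodr_const -cardsDS //; congr (_ ^+ _ * _ ^+ _); apply: eq_card => x.
  by rewrite unfold_in /=; case xE: (x \in E); rewrite ?andbF ?andbT ?(fintype.subsetP EU x xE).
by rewrite unfold_in /= !inE andbC.
Qed.

Lemma gnp_mean_prod_edges (F : {set {set 'I_n}}) : F \subset edges n ->
  bern_mean (gnp_edge_prob p) (fun E => \prod_(x in F) (x \in E)%:R) = p ^+ #|F|.
Proof.
move=> FU; rewrite bern_mean_prod_mem -prodr_const; apply: eq_bigr => x xF.
by rewrite /gnp_edge_prob (fintype.subsetP FU x xF) mul1r.
Qed.

End GnpMean.

Section LowerCone.
Variable n : nat.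
Implicit Types (s : {set 'I_n}) (E : {set {set 'I_n}}).

Lemma minv_le s j : j \in s -> (minv s <= val j)%N.
Proof. by move=> js; have := bigmin_le_cond n val js; rewrite minEnat leEnat. Qed.

Lemma minv_leq_n s : (minv s <= n)%N.
Proof. by have := bigmin_le_id (index_enum _) n (mem s) val; rewrite minEnat leEnat. Qed.

Definition below s (i : 'I_n) : bool := (val i < minv s)%N.

Lemma below_neq s i j : below s i -> j \in s -> i != j.
Proof. by move=> bi /minv_le sj; apply/eqP => eij; move: bi; rewrite /below eij ltnNge sj. Qed.

Arguments below_neq {s i j}.

Lemma card_below s : #|[set i | below s i]| = minv s.
Proof.
have widen_inj : injective (widen_ord (minv_leq_n s)).
  by move=> a b /(congr1 val) /= ab; apply: val_inj.
rewrite -[RHS](card_ord (minv s)) -(card_imset _ widen_inj).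
apply: eq_card => i; rewrite inE; apply/idP/imsetP => [bi|[j _ ->]].
  by exists (Ordinal bi) => //; apply: val_inj.
by rewrite /below /= ltn_ord.
Qed.

(* Such an i makes s U {i} a simplex whenever s is one, so the lexicographical
   matching pairs s with a larger simplex and s is not critical. *)
Definition lower_cone s E : bool :=
  [exists i, below s i && [forall j in s, [set i; j] \in E]].

Lemma crit_term_eq0 (R : realType) s E : lower_cone s E -> crit_term R E s = 0.
Proof.
case/existsP=> i /andP[bi /forallP adj].
have Yi1 j : j \in s -> Y R E i j = 1 by move=> js; rewrite /Y (implyP (adj j) js).
have zero_all : \prod_(i0 | (val i0 < minv s)%N) (1 - \prod_(j in s) Y R E i0 j) = 0.
  by rewrite (bigD1 i) //= big1 ?subrr ?mul0r.
have zero_sub : \prod_(i0 | (val i0 < minv s)%N)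
    (1 - \prod_(j in s | val j != minv s) Y R E i0 j) = 0.
  by rewrite (bigD1 i) //= big1 ?subrr ?mul0r // => j /andP[js _]; exact: Yi1.
by rewrite /crit_term zero_all zero_sub subrr mulr0.
Qed.

Lemma lower_coneNE (R : realType) s E :
  (~~ lower_cone s E)%:R = \prod_(i in [set i | below s i]) (1 - \prod_(j in s) Y R E i j).
Proof.
have [/existsP[i /andP[bi /forallP adj]]|noc] := boolP (lower_cone s E).
  rewrite (bigD1 i) ?inE //= big1 ?subrr ?mul0r // => j js.
  by rewrite /Y (implyP (adj j) js).
rewrite big1 // => i; rewrite inE => bi.
have /forallPn[j] : ~~ [forall j in s, [set i; j] \in E].
  by apply: contra noc => adj; apply/existsP; exists i; rewrite bi.
by rewrite negb_imply => /andP[js jE]; rewrite (bigD1 j) //= /Y (negbTE jE) mul0r subr0.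
Qed.

Lemma gnp_mean_cone (R : realType) (p : R) s (J : {set 'I_n}) :
  J \subset [set i | below s i] ->
  bern_mean (gnp_edge_prob p) (fun E => \prod_(i in J) \prod_(j in s) Y R E i j)
  = p ^+ (#|J| * #|s|).
Proof.
move=> Jb; have bJ i : i \in J -> below s i by move/(fintype.subsetP Jb); rewrite inE.
pose link (x : 'I_n * 'I_n) := [set x.1; x.2].
have link_inj : {in finset.setX J s &, injective link}.
  move=> [i j] [i' j'] /finset.setXP[/bJ bi js] /finset.setXP[/bJ bi' js'].
  rewrite /link /= => e.
  have ii' : i = i'.
    have : i \in [set i'; j'] by rewrite -e set21.
    by rewrite !inE => /orP[/eqP //|/eqP ij']; move: (below_neq bi js'); rewrite ij' eqxx.
  subst i'; congr pair.
  have : j' \in [set i; j] by rewrite e set22.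
  by rewrite !inE => /orP[/eqP ji|/eqP //]; move: (below_neq bi js'); rewrite ji eqxx.
have links_edges : link @: finset.setX J s \subset edges n.
  apply/fintype.subsetP => _ /imsetP[[i j] /finset.setXP[/bJ bi js] ->].
  by rewrite inE cards2 (below_neq bi js).
rewrite -cardsX -(card_in_imset link_inj) -gnp_mean_prod_edges //.
apply: eq_bigr => E _; congr (_ * _).
rewrite big_imset //= pair_big /=; apply: eq_bigl => -[i j].
by rewrite finset.in_setX.
Qed.

Lemma gnp_mean_lower_coneN (R : realType) (p : R) s :
  bern_mean (gnp_edge_prob p) (fun E => (~~ lower_cone s E)%:R) = (1 - p ^+ #|s|) ^+ minv s.
Proof.
set B := [set i | below s i].
transitivity (bern_mean (gnp_edge_prob p)
    (fun E => \sum_(J in powerset B) (-1) ^+ #|J| * \prod_(i in J) \prod_(j in s) Y R E i j)).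
  by apply: eq_bigr => E _; rewrite lower_coneNE prodr1B_powerset.
have -> : (1 - p ^+ #|s|) ^+ minv s = \prod_(i in B) (1 - p ^+ #|s|).
  by rewrite prodr_const card_below.
rewrite bern_mean_sum prodr1B_powerset; apply: eq_bigr => J; rewrite powersetE => JB.
by rewrite bern_meanZ gnp_mean_cone // prodr_const -exprM mulnC.
Qed.

End LowerCone.

Arguments lower_cone {n} s E.

Lemma Tcrit_neq_lower_coneN (R : realType) n k (K : int) (E : {set {set 'I_n}}) :
  Tcrit R n k E != TcritK R n k K E ->
  exists2 s : {set 'I_n}, (#|s| == k.+1) && ~~ ((minv s).+1%:Z <= K) & ~~ lower_cone s E.
Proof.
move=> neq.
have /existsP[s /andP[Ps Ls]] :
    [exists s : {set 'I_n}, ((#|s| == k.+1) && ~~ ((minv s).+1%:Z <= K)) && ~~ lower_cone s E].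
  apply: contraNT neq => /existsPn none.
  rewrite /Tcrit /TcritK (bigID (fun s => (minv s).+1%:Z <= K)) /=.
  rewrite [X in _ + X]big1 ?addr0 // => s /andP[sk sK]; apply: crit_term_eq0.
  by have := none s; rewrite sk sK /= negbK.
by exists s.
Qed.

Lemma gnp_prob_Tcrit_neq_le (R : realType) n k (p : R) (K : int) (N : nat) :
  0 <= p <= 1 -> N%:Z <= K ->
  gnp_prob R n p (fun E => Tcrit R n k E != TcritK R n k K E)
  <= (n ^ k.+1)%:R * (1 - p ^+ k.+1) ^+ N.
Proof.
move=> /andP[p0 p1] NK.
have q01 (x : {set 'I_n}) : 0 <= gnp_edge_prob p x <= 1.
  by rewrite /gnp_edge_prob; case: (x \in edges n); rewrite ?mul1r ?mul0r ?p0 ?p1 ?lexx ?ler01.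
have c0 : 0 <= 1 - p ^+ k.+1 by rewrite subr_ge0 exprn_ile1.
have c1 : 1 - p ^+ k.+1 <= 1 by rewrite lerBlDr lerDl exprn_ge0.
rewrite gnp_prob_mean.
apply: le_trans (@bern_mean_union_le _ _ _ q01 _ _ (fun s E => ~~ lower_cone s E) _
  (@Tcrit_neq_lower_coneN R n k K)) _.
apply: (@le_trans _ _ (\sum_(s : {set 'I_n} | #|s| == k.+1) (1 - p ^+ k.+1) ^+ N)).
  rewrite [leRHS]big_mkcond [leLHS]big_mkcond /=; apply: ler_sum => s _.
  have [/eqP sk|//] := boolP (#|s| == k.+1).
  have [_|sK] := boolP ((minv s).+1%:Z <= K); first exact: exprn_ge0.
  rewrite /= gnp_mean_lower_coneN sk; apply: ler_wiXn2l => //.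
  by move: NK sK; lia.
rewrite sumr_const -[leLHS]mulr_natl; apply: ler_wpM2r; first exact: exprn_ge0.
rewrite ler_nat.
have -> : #|[pred s : {set 'I_n} | #|s| == k.+1]| = #|[set s : {set 'I_n} | #|s| == k.+1]|.
  by apply: eq_card => s; rewrite inE.
by rewrite card_draws card_ord bin_leq_exp.
Qed.

Local Open Scope classical_set_scope.

Lemma eventually_mul_ln_le {R : realType} {f : nat -> R} {eps : R} (M : R) :
  0 < eps -> 0 <= M ->
  (fun n => f n / ln (n%:R : R) `^ (1 + eps)) @ \oo --> +oo ->
  \forall n \near \oo, M * ln (n%:R : R) <= f n.
Proof.
move=> eps0 M0 /cvgryPge/(_ M) fM.
near=> n.
have e_le_n : expR 1 <= (n%:R : R) by near: n; exact: nbhs_infty_ger.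
have ln_ge1 : 1 <= ln (n%:R : R).
  by rewrite -[leLHS](expRK 1) ler_ln ?posrE ?expR_gt0 // (lt_le_trans (expR_gt0 1)).
have ln_le : ln (n%:R : R) <= ln (n%:R : R) `^ (1 + eps).
  by apply: le1r_powR => //; rewrite lerDl ltW.
have lnX_gt0 : 0 < ln (n%:R : R) `^ (1 + eps) by apply: lt_le_trans ln_le; exact: lt_le_trans ln_ge1.
have : M <= f n / ln (n%:R : R) `^ (1 + eps) by near: n.
by rewrite ler_pdivlMr // => /(le_trans _); apply; exact: ler_wpM2l.
Unshelve. all: by end_near.
Qed.

Lemma exprn_mul_geo_le1 (R : realType) (x c : R) (a N : nat) :
  0 < x -> 0 < c < 1 -> a%:R / - ln c * ln x <= N%:R -> x ^+ a * c ^+ N <= 1.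
Proof.
move=> x0 /andP[c0 c1]; have lnc : 0 < - ln c by rewrite oppr_gt0 ln_lt0 // c0.
rewrite mulrAC ler_pdivrMr // => h.
rewrite -(@ler_ln R) ?posrE ?mulr_gt0 ?exprn_gt0 // ln1 lnM ?posrE ?exprn_gt0 // !lnXn //.
by rewrite -[ln x *+ a]mulr_natl -[ln c *+ N]mulr_natl -lerBrDr sub0r -mulrN.
Qed.

Lemma cvg_invn (R : realType) : (fun n => (n%:R : R)^-1) @ \oo --> 0.
Proof. by rewrite -cvg_shiftS; exact: cvg_harmonic. Qed.

Theorem proposition4p5 (R : realType) (k : nat) (p : R) (K : nat -> int) (eps : R) :
  (1 <= k)%N -> 0 < p -> p < 1 ->
  (forall n : nat, K n <= n%:Z - k%:Z) ->
  0 < eps ->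
  (fun n : nat => (K n)%:~R / (ln (n%:R : R)) `^ (1 + eps)) @ \oo --> +oo ->
  (fun n : nat => gnp_prob R n p (fun E => Tcrit R n k E != TcritK R n k (K n) E)) @ \oo --> 0.
Proof.
move=> _ p_gt0 p_lt1 _ eps_gt0 K_ln.
have p01 : 0 <= p <= 1 by rewrite !ltW.
set c := 1 - p ^+ k.+1.
have c01 : 0 < c < 1 by rewrite subr_gt0 exprn_ilt1 ?ltW // ltrBlDr ltrDl exprn_gt0.
set M := k.+2%:R / - ln c.
have M_ge0 : 0 <= M by rewrite divr_ge0 // oppr_ge0 ln_le0 // ltW; case/andP: c01.
have K_ge := eventually_mul_ln_le M eps_gt0 M_ge0 K_ln.
apply: (@squeeze_cvgr _ _ _ _ (fun=> 0) (fun n => n%:R^-1)); last 2 first.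
- exact: cvg_cst.
- exact: cvg_invn.
near=> n.
have n_ge1 : 1 <= (n%:R : R) by near: n; exact: nbhs_infty_ger.
have n_gt0 : 0 < (n%:R : R) by exact: lt_le_trans n_ge1.
have KM : M * ln (n%:R : R) <= (K n)%:~R by near: n.
have K_ge0 : 0 <= K n.
  by rewrite -(ler0z R); apply: le_trans KM; rewrite mulr_ge0 ?ln_ge0.
have absK : (`|K n|%N%:R : R) = (K n)%:~R by rewrite -{2}(gez0_abs K_ge0).
have bound : (n%:R : R) ^+ k.+2 * c ^+ `|K n|%N <= 1.
  by apply: exprn_mul_geo_le1; rewrite // absK.
rewrite gnp_prob_ge0 //=.
apply: le_trans (@gnp_prob_Tcrit_neq_le R n k p (K n) `|K n|%N p01 _) _.
  by rewrite gez0_abs.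
by rewrite natrX -(ler_pM2l n_gt0) mulfV ?gt_eqF // mulrA -exprS.
Unshelve. all: by end_near.
Qed.
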